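(* Let $Y$ be a real normed space, $K\subset Y$ a pointed closed convex cone, and $A,B,C\subset Y$ nonempty sets such that $C$ is $K$-bounded and $$A+C\subset\operatorname{cl}(C+B+K).$$ Then $A\subset\operatorname{cl}\operatorname{conv}(B+K)$.
   Context: A nonempty set $C\subset Y$ is $K$-bounded if there is a bounded set $M\subset Y$ with $C\subset M+K$. $\operatorname{cl}$ denotes norm closure and $\operatorname{conv}$ the convex hull. *)

From HB Require Import structures.
From mathcomp Require Import all_boot all_order all_algebra.
From mathcomp Require Import all_classical all_reals all_analysis.
Set Implicit Arguments. Unset Strict Implicit. Unset Printing Implicit Defensive.
Import Order.TTheory GRing.Theory Num.Theory.
Import numFieldNormedType.Exports.
Local Open Scope classical_set_scope.
Local Open Scope ring_scope.

Section Defs.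
Variables (R : realType) (Y : normedModType R).

Definition minkowski_sum (A B : set Y) : set Y :=
  [set z | exists a b, A a /\ B b /\ z = a + b].

Definition is_convex (S : set Y) : Prop :=
  forall x y (t : R), S x -> S y -> 0 <= t -> t <= 1 ->
    S (t *: x + (1 - t) *: y).

Definition conv_hull (S : set Y) : set Y :=
  [set x | forall T : set Y, is_convex T -> S `<=` T -> T x].

Definition is_cone (K : set Y) : Prop :=
  K 0 /\ forall (t : R) k, 0 <= t -> K k -> K (t *: k).

Definition is_pointed (K : set Y) : Prop :=
  forall k, K k -> K (- k) -> k = 0.

Definition pointed_closed_convex_cone (K : set Y) : Prop :=
  [/\ is_cone K, is_convex K, closed K & is_pointed K].

Definition K_bounded (K C : set Y) : Prop :=
  C !=set0 /\ exists M : set Y, bounded_set M /\ C `<=` minkowski_sum M K.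

End Defs.

From HB Require Import structures.
From mathcomp Require Import all_boot all_order all_algebra.
From mathcomp Require Import all_classical all_reals all_analysis.
Import Order.TTheory GRing.Theory Num.Theory.
Import numFieldNormedType.Exports.
Set Implicit Arguments. Unset Strict Implicit. Unset Printing Implicit Defensive.
Local Open Scope classical_set_scope.
Local Open Scope ring_scope.

(** Fix a in A and e > 0.  Starting from some c_0 in C, the inclusion
    A + C ⊆ cl(C + B + K) yields c_{i+1} in C and x_{i+1} = b + k in B + K with
    a + c_i within e of c_{i+1} + x_{i+1}.  Summing n steps, n a + c_0 is within
    n e of c_n + (x_1 + ... + x_n).  Write c_n = m + k with m in the bounded set M
    and k in K; dividing by n, a is within e + (|m - c_0|)/n of the point
    (x_1 + ... + x_n)/n + k/n, which lies in conv(B + K) since K is a convex cone.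
    As n grows, a is within 2e of conv(B + K). *)

Lemma addr_telescope (V : zmodType) (x a c0 c1 cn p b : V) :
  x + a + c0 - cn - (p + b) = (a + c0 - (c1 + b)) + (x + c1 - cn - p).
Proof.
rewrite !opprD !addrA !(addrAC _ c1) !(addrAC _ (- c1)) addrK !(addrAC _ (- b)).
by rewrite (addrC x a) (addrAC a x c0).
Qed.

Lemma subr_recenter (V : zmodType) (x p k c m : V) :
  x - (p + k) = (x + c - (m + k) - p) + (m - c).
Proof.
rewrite !opprD !addrA !(addrAC _ c) subrK !(addrAC _ (- m)) addrK.
by rewrite addrAC.
Qed.

Lemma closure_normP (R : numFieldType) (V : normedModType R) (S : set V) x :
  closure S x <-> forall e, 0 < e -> exists2 y, S y & `|x - y| < e.
Proof.
split=> [Sx e e0 | Sx N /nbhs_ballP [e /= e0 Ne]].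
- have [y [Sy]] := Sx _ (nbhsx_ballx x e e0).
  by rewrite -ball_normE; exists y.
- have [y Sy xy] := Sx e e0; exists y; split => //.
  by apply: Ne; rewrite -ball_normE.
Qed.

Section ConvexHull.
Variables (R : realType) (Y : normedModType R).
Implicit Types (S K B : set Y).

Lemma conv_hull_convex S : is_convex (conv_hull S).
Proof.
by move=> x y t Sx Sy t0 t1 T cT ST; apply: (cT) => //; [apply: Sx | apply: Sy].
Qed.

Lemma sub_conv_hull S : S `<=` conv_hull S.
Proof. by move=> x Sx T _ ST; apply: ST. Qed.

Lemma convex_average S (n : nat) p q : is_convex S -> S p -> S q ->
  exists2 r, S r & n.+1%:R *: r = n%:R *: p + q.
Proof.
move=> cS Sp Sq; have n1 : n.+1%:R != 0 :> R by rewrite pnatr_eq0.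
pose t : R := n%:R / n.+1%:R.
exists (t *: p + (1 - t) *: q).
  apply: cS => //; first by rewrite divr_ge0.
  by rewrite ler_pdivrMr ?ltr0n // mul1r ler_nat.
rewrite scalerDr !scalerA /t mulrBr mulr1 mulrCA mulfV // mulr1.
by rewrite -natrB // subSnn scale1r.
Qed.

Lemma cone_addr_closed K x y : is_cone K -> is_convex K -> K x -> K y -> K (x + y).
Proof.
move=> [_ Ks] cK Kx Ky; have half1 : 1 - 2^-1 = 2^-1 :> R.
  by rewrite {1}(splitr 1) mul1r addrK.
have -> : x + y = 2 *: (2^-1 *: x + (1 - 2^-1) *: y).
  by rewrite half1 scalerDr !scalerA mulfV ?pnatr_eq0 // !scale1r.
by apply: Ks => //; apply: cK; rewrite ?invr_ge0 ?invf_le1 ?ler1n.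
Qed.

Lemma conv_hull_sum_cone_addr K B x k : is_cone K -> is_convex K ->
  conv_hull (minkowski_sum B K) x -> K k -> conv_hull (minkowski_sum B K) (x + k).
Proof.
move=> coK cK Hx; move: k.
apply: (Hx [set z | forall k, K k -> conv_hull (minkowski_sum B K) (z + k)]).
- move=> u v t Hu Hv t0 t1 k' Kk'.
  have -> : t *: u + (1 - t) *: v + k' = t *: (u + k') + (1 - t) *: (v + k').
    by rewrite !scalerDr addrACA -scalerDl [t + _]addrC subrK scale1r.
  by apply: conv_hull_convex; [apply: Hu|apply: Hv|..].
- move=> _ [b [k0 [Bb [Kk0 ->]]]] k' Kk'.
  apply: sub_conv_hull; exists b, (k0 + k'); split => //.
  by split; [exact: cone_addr_closed | rewrite addrA].
Qed.

End ConvexHull.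

Section Approximation.
Variables (R : realType) (Y : normedModType R) (K B C : set Y) (a : Y) (e : R).
Hypotheses (coK : is_cone K) (cK : is_convex K).
Hypothesis approx_step : forall c, C c ->
  exists c' b k, [/\ C c', B b, K k & `|a + c - (c' + b + k)| < e].

Let H := conv_hull (minkowski_sum B K).

Lemma iterated_approx b0 : B b0 -> forall n c0, C c0 ->
  exists cn p, [/\ C cn, H p & `|n%:R *: a + c0 - cn - n%:R *: p| <= n%:R * e].
Proof.
move=> Bb0; elim=> [|n IHn] c0 Cc0.
  exists c0, (b0 + 0); split => //.
    by apply: sub_conv_hull; exists b0, 0; split => //; split => //; case: coK.
  by rewrite !scale0r add0r subrr subr0 normr0 mul0r.
have [c1 [b [k [Cc1 Bb Kk step]]]] := approx_step Cc0.
have [cn [p [Ccn Hp err]]] := IHn c1 Cc1.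
have Hbk : H (b + k) by apply: sub_conv_hull; exists b, k.
have [r Hr avg_r] := convex_average n (@conv_hull_convex _ _ _) Hp Hbk.
exists cn, r; split => //.
rewrite avg_r -natr1 scalerDl scale1r (addr_telescope _ _ _ c1).
rewrite (addrA c1) mulrDl mul1r [_ + e]addrC.
by apply: le_trans (ler_normD _ _) _; rewrite lerD // ltW.
Qed.

Lemma approx_conv_hull M b0 c0 : bounded_set M -> C `<=` minkowski_sum M K ->
  B b0 -> C c0 -> exists2 p, H p & `|a - p| < e *+ 2.
Proof.
move=> Mb CM Bb0 Cc0.
have [rM _ boundM] := pinfty_ex_gt0 Mb.
have e0 : 0 < e.
  by have [_ [_ [_ [_ _ _ /(le_lt_trans (normr_ge0 _))]]]] := approx_step Cc0.
pose n := (Num.truncn ((rM + `|c0|) / e)).+1.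
have [cn [p [Ccn Hp err]]] := iterated_approx Bb0 n Cc0.
have [m [k [Mm [Kk cn_mk]]]] := CM _ Ccn; subst cn.
have n0 : 0 < n%:R :> R by rewrite ltr0n.
have Kkn : K (n%:R^-1 *: k) by case: coK => _ Ks; apply: Ks; rewrite ?invr_ge0 ?ltW.
exists (p + n%:R^-1 *: k); first exact: conv_hull_sum_cone_addr.
have dist_m : `|m - c0| < n%:R * e.
  apply: le_lt_trans (ler_normB _ _) _; rewrite -ltr_pdivrMr //.
  apply: le_lt_trans (truncnS_gt _).
  by rewrite ler_pM2r ?invr_gt0 // lerD2r; apply: boundM.
rewrite -(ltr_pM2l n0) -[X in X * _](ger0_norm (ltW n0)) -normrZ.
rewrite scalerBr scalerDr scalerA mulfV ?gt_eqF // scale1r (subr_recenter _ _ _ c0 m).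
by apply: le_lt_trans (ler_normD _ _) _; rewrite mulr2n mulrDr ler_ltD.
Qed.

End Approximation.

Theorem mainTheorem3 (R : realType) (Y : normedModType R) (K A B C : set Y) :
  pointed_closed_convex_cone K ->
  A !=set0 -> B !=set0 -> C !=set0 ->
  K_bounded K C ->
  minkowski_sum A C `<=` closure (minkowski_sum (minkowski_sum C B) K) ->
  A `<=` closure (conv_hull (minkowski_sum B K)).
Proof.
move=> [coK cK _ _] _ [b0 Bb0] [c0 Cc0] [_ [M [Mb CM]]] ACsub a Aa.
apply/closure_normP => e e0; have e20 : 0 < e / 2 by rewrite divr_gt0.
have step c : C c -> exists c' b k, [/\ C c', B b, K k & `|a + c - (c' + b + k)| < e / 2].
  move=> Cc; have /ACsub/closure_normP/(_ _ e20) : minkowski_sum A C (a + c) by exists a, c.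
  by move=> [_ [_ [k [[c' [b [Cc' [Bb ->]]]] [Kk ->]]]] close]; exists c', b, k.
have [p Hp close] := approx_conv_hull coK cK step Mb CM Bb0 Cc0.
by exists p; rewrite // [e]splitr -mulr2n.
Qed.
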